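(* There exist a wGKAT automaton $(Y,\gamma)$ and a homomorphism $h:(\mathrm{Exp},\partial)\to(Y,\gamma)$ whose kernel $\{(e,f): h(e)=h(f)\}$ is exactly the relation $\equiv$; concretely, there is a transition map $\partial_\equiv$ on $\mathrm{Exp}/{\equiv}$ making the quotient map $[-]_\equiv$ a homomorphism from $(\mathrm{Exp},\partial)$ to $(\mathrm{Exp}/{\equiv},\partial_\equiv)$.
   Context: Fix a finite set $T$ of primitive tests, a set $\mathrm{Act}$ of atomic actions, a set $\mathrm{Out}$ of return values, and a semiring $(S,+,\cdot,0,1)$ that is positive ($x+y=0\Rightarrow x=y=0$), refinement (whenever $x+y=z+w$ there exist $s,t,u,v$ with $s+t=x$, $s+u=z$, $u+v=y$, $t+v=w$) and Conway (with ${}^*:S\to S$ satisfying $(a+b)^*=a^*(ba^* )^*$, $(ab)^*=1+a(ba)^*b$). Tests: $b,c\in\mathrm{BExp}::=\mathtt{0}\mid\mathtt{1}\mid t\ (t\in T)\mid\bar b\mid b+c\mid bc$ ($\mathtt 0,\mathtt 1$ false/true, distinct from semiring $0,1$); $\equiv_{BA}$ is Boolean equivalence; $\mathrm{At}$ is the finite set of atoms of the free Boolean algebra on $T$, atoms also regarded as tests; $\alpha\le b$ means $\alpha$ entails $b$. Expressions: $e,f\in\mathrm{Exp}::= p\in\mathrm{Act}\mid b\in\mathrm{BExp}\mid e+_b f\mid e;f\mid e^{(b)}\mid v\in\mathrm{Out}\mid e\oplus_{r,s} f\ (r,s\in S)$; $\odot r:=\mathtt 1\oplus_{r,0}\mathtt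 0$. $\mathcal M_\omega(X)$: finitely supported maps $X\to S$, pointwise operations; $\delta_x$ indicator of $x$; $\nu[A]=\sum_{x\in A}\nu(x)$. A wGKAT automaton is $(X,\beta)$ with $\beta:X\to\mathcal M_\omega(\{\mathsf{acc},\mathsf{rej}\}+\mathrm{Out}+\mathrm{Act}\times X)^{\mathrm{At}}$. A map $h:X\to Y$ between automata $(X,\beta),(Y,\gamma)$ is a homomorphism if for all $x,\alpha$: $\gamma(h(x))_\alpha(o)=\beta(x)_\alpha(o)$ for $o\in\{\mathsf{acc},\mathsf{rej}\}+\mathrm{Out}$, and $\gamma(h(x))_\alpha(p,y)=\beta(x)_\alpha[\{p\}\times h^{-1}(y)]$. The derivative automaton $(\mathrm{Exp},\partial)$: $\partial(b)_\alpha=\delta_{\mathsf{acc}}$ if $\alpha\le b$, else $\delta_{\mathsf{rej}}$; $\partial(v)_\alpha=\delta_v$; $\partial(p)_\alpha=\delta_{(p,\mathtt 1)}$; $\partial(e+_bf)_\alpha=\partial(e)_\alpha$ if $\alpha\le b$, else $\partial(f)_\alpha$; $\partial(e\oplus_{r,s}f)_\alpha=r\partial(e)_\alpha+s\partial(f)_\alpha$; $\partial(e;f)_\alpha=\sum_x\partial(e)_\alpha(x)c_{\alpha,f}(x)$ with $c_{\alpha,f}(\mathsf{acc})=\partial(f)_\alpha$, $c_{\alpha,f}(x)=\delta_x$ for $x\in\{\mathsf{rej}\}\cup\mathrm{Out}$, $c_{\alpha,f}(p,e')=\delta_{(p,e';f)}$; $\partial(e^{(b)})_\alpha(x)$ is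 $1$ if $x=\mathsf{acc}$ and $\alpha\le\bar b$; $\partial(e)_\alpha(\mathsf{acc})^*\partial(e)_\alpha(x)$ if $x\in\{\mathsf{rej}\}\cup\mathrm{Out}$ and $\alpha\le b$; $\partial(e)_\alpha(\mathsf{acc})^*\partial(e)_\alpha(p,e')$ if $x=(p,e';e^{(b)})$ and $\alpha\le b$; $0$ otherwise. $E:\mathrm{Exp}\to S^{\mathrm{At}}$: $E(p)_\alpha=E(v)_\alpha=0$; $E(b)_\alpha=1$ if $\alpha\le b$ else $0$; $E(e\oplus_{r,s}f)_\alpha=rE(e)_\alpha+sE(f)_\alpha$; $E(e+_bf)_\alpha=E(e)_\alpha$ if $\alpha\le b$ else $E(f)_\alpha$; $E(e;f)_\alpha=E(e)_\alpha E(f)_\alpha$; $E(e^{(b)})_\alpha=E(\bar b)_\alpha$. The relation $\equiv$ is the smallest congruence on $\mathrm{Exp}$ (tests taken up to $\equiv_{BA}$; sequencing binds tighter than $\oplus$, $\odot$ binds tightest) containing, for all $e,f,g\in\mathrm{Exp}$, tests $b,c$, $v\in\mathrm{Out}$, $r,s,t,u\in S$: (G1) $e+_be\equiv e$; (G2) $e+_bf\equiv b;e+_bf$; (G3) $e+_bf\equiv f+_{\bar b}e$; (G4) $(e+_bf)+_cg\equiv e+_{bc}(f+_cg)$; (D1) $e\oplus_{r,s}(f+_bg)\equiv(e\oplus_{r,s}f)+_b(e\oplus_{r,s}g)$; (D2) $e\oplus_{r,s}(f\oplus_{t,u}g)\equiv e\oplus_{r,1}(f\oplus_{st,su}g)$;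 (D3) $b;(e\oplus_{r,s}f)\equiv b;(b;e\oplus_{r,s}b;f)$; (S1) $\mathtt 1;e\equiv e\equiv e;\mathtt 1$; (S2) $(e;f);g\equiv e;(f;g)$; (S3) $\mathtt 0;e\equiv\mathtt 0$; (S4) $(e\oplus_{r,s}f);g\equiv e;g\oplus_{r,s}f;g$; (S5) $(e+_bf);g\equiv e;g+_bf;g$; (S6) $v;e\equiv v$; (S7) $b;c\equiv bc$; (L1) $e^{(b)}\equiv e;e^{(b)}+_b\mathtt 1$; (C1) $\odot1\equiv\mathtt 1$; (C2) $\odot0;e\equiv\odot0$; (W1) $e\oplus_{r,s}e\equiv\odot(r+s);e$; (W2) $e\oplus_{r,s}f\equiv f\oplus_{s,r}e$; (W3) $e\oplus_{r,s}(f\oplus_{t,u}g)\equiv(e\oplus_{r,st}f)\oplus_{1,su}g$; (W4) $e\oplus_{ru,s}f\equiv(\odot u;e)\oplus_{r,s}f$; and closed under the rules (L2) if $e\equiv(f\oplus_{r,s}\mathtt 1)+_cg$ then $c;e^{(b)}\equiv c;((\odot(s^*r);f;e^{(b)})+_b\mathtt 1)$; (F1) if $g\equiv e;g+_bf$ and $E(e)_\alpha=0$ for all $\alpha\in\mathrm{At}$ then $g\equiv e^{(b)};f$. *)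

From HB Require Import structures.
From mathcomp Require Import all_boot all_order all_algebra.
From mathcomp Require Import boolp.
From Stdlib Require List.
Set Implicit Arguments. Unset Strict Implicit. Unset Printing Implicit Defensive.
Import GRing.Theory.
Local Open Scope ring_scope.

Section Tests.
Variable T : finType.

Inductive BExp : Type :=
| BZero | BOne | BPrim (t : T) | BNeg (b : BExp) | BOr (b c : BExp) | BAnd (b c : BExp).

(* Atoms of the free Boolean algebra on T = valuations T -> bool. *)
Definition At : Type := {ffun T -> bool}.

(* beval b a = true  <->  the atom a entails b  (a <= b). *)
Fixpoint beval (b : BExp) (a : At) : bool :=
  match b with
  | BZero => false
  | BOne => true
  | BPrim t => a t
  | BNeg b => ~~ beval b a
  | BOr b c => beval b a || beval c a
  | BAnd b c => beval b a && beval c a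
  end.

Definition ba_eq (b c : BExp) : Prop := forall a : At, beval b a = beval c a.
End Tests.
Arguments BZero {T}. Arguments BOne {T}.

Section Exprs.
Variables (T : finType) (Act Out : Type) (S : pzSemiRingType).

Inductive Exp : Type :=
| EAct (p : Act)
| ETest (b : BExp T)
| EIf (e f : Exp) (b : BExp T)
| ESeq (e f : Exp)
| ELoop (e : Exp) (b : BExp T)
| ERet (v : Out)
| EPlus (e f : Exp) (r s : S).

Definition odot (r : S) : Exp := EPlus (ETest BOne) (ETest BZero) r 0.

Inductive Ev (X : Type) : Type :=
| Acc | Rej | Ret (v : Out) | Tr (p : Act) (x : X).

Arguments Acc {X}. Arguments Rej {X}. Arguments Ret {X} v. Arguments Tr {X} p x.

Definition fin_supp (X : Type) (f : X -> S) : Prop :=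
  exists s : seq X, forall x, f x <> 0 -> List.In x s.

Definition massP (X : Type) (f : X -> S) (A : X -> Prop) (m : S) : Prop :=
  exists s : seq X, List.NoDup s /\ (forall x, f x <> 0 -> List.In x s) /\
    m = \sum_(x <- s) (if `[< A x >] then f x else 0).

Definition is_automaton (X : Type) (beta : X -> At T -> Ev X -> S) : Prop :=
  forall x a, fin_supp (beta x a).

Definition is_hom (X Y : Type) (beta : X -> At T -> Ev X -> S)
    (gamma : Y -> At T -> Ev Y -> S) (h : X -> Y) : Prop :=
  forall (x : X) (a : At T),
    gamma (h x) a Acc = beta x a Acc /\
    gamma (h x) a Rej = beta x a Rej /\
    (forall v, gamma (h x) a (Ret v) = beta x a (Ret v)) /\
    (forall p (y : Y),
       massP (beta x a) (fun o => exists x', o = Tr p x' /\ h x' = y)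
             (gamma (h x) a (Tr p y))).

Variable star : S -> S.

Definition ind (o o' : Ev Exp) : S := if `[< o = o' >] then 1 else 0.

Fixpoint wderiv (e : Exp) (a : At T) (o : Ev Exp) {struct e} : S :=
  match e with
  | ETest b => if beval b a then ind Acc o else ind Rej o
  | ERet v => ind (Ret v) o
  | EAct p => ind (Tr p (ETest BOne)) o
  | EIf e f b => if beval b a then wderiv e a o else wderiv f a o
  | EPlus e f r s => r * wderiv e a o + s * wderiv f a o
  | ESeq e f =>
      (* sum_x wderiv e a x * c_{a,f}(x)(o) *)
      wderiv e a Acc * wderiv f a o +
      match o with
      | Acc => 0
      | Rej => wderiv e a Rej
      | Ret v => wderiv e a (Ret v)
      | Tr p g =>
          match g with
          | ESeq e' f' => if `[< f' = f >] then wderiv e a (Tr p e') else 0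
          | _ => 0
          end
      end
  | ELoop e b =>
      match o with
      | Acc => if beval b a then 0 else 1
      | Rej => if beval b a then star (wderiv e a Acc) * wderiv e a Rej else 0
      | Ret v => if beval b a then star (wderiv e a Acc) * wderiv e a (Ret v) else 0
      | Tr p g =>
          if beval b a then
            match g with
            | ESeq e' f' =>
                if `[< f' = ELoop e b >]
                then star (wderiv e a Acc) * wderiv e a (Tr p e') else 0
            | _ => 0
            end
          else 0
      end
  end.

Fixpoint Eterm (e : Exp) (a : At T) : S :=
  match e with
  | EAct _ => 0
  | ERet _ => 0
  | ETest b => if beval b a then 1 else 0
  | EPlus e f r s => r * Eterm e a + s * Eterm f a
  | EIf e f b => if beval b a then Eterm e a else Eterm f a
  | ESeq e f => Eterm e a * Eterm f a
  | ELoop e b => if beval b a then 0 else 1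
  end.

Local Notation "e ;; f" := (ESeq e f) (at level 40, left associativity).
Local Notation one := (ETest BOne).

Inductive wequiv : Exp -> Exp -> Prop :=
| eq_refl e : wequiv e e
| eq_sym e f : wequiv e f -> wequiv f e
| eq_trans e f g : wequiv e f -> wequiv f g -> wequiv e g
| eq_test b c : ba_eq b c -> wequiv (ETest b) (ETest c)
| eq_if e e' f f' b b' : wequiv e e' -> wequiv f f' -> ba_eq b b' ->
    wequiv (EIf e f b) (EIf e' f' b')
| eq_seq e e' f f' : wequiv e e' -> wequiv f f' -> wequiv (e ;; f) (e' ;; f')
| eq_loop e e' b b' : wequiv e e' -> ba_eq b b' -> wequiv (ELoop e b) (ELoop e' b')
| eq_plus e e' f f' r s : wequiv e e' -> wequiv f f' ->
    wequiv (EPlus e f r s) (EPlus e' f' r s)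
| ax_G1 e b : wequiv (EIf e e b) e
| ax_G2 e f b : wequiv (EIf e f b) (EIf (ETest b ;; e) f b)
| ax_G3 e f b : wequiv (EIf e f b) (EIf f e (BNeg b))
| ax_G4 e f g b c : wequiv (EIf (EIf e f b) g c) (EIf e (EIf f g c) (BAnd b c))
| ax_D1 e f g b r s :
    wequiv (EPlus e (EIf f g b) r s) (EIf (EPlus e f r s) (EPlus e g r s) b)
| ax_D2 e f g r s t u :
    wequiv (EPlus e (EPlus f g t u) r s) (EPlus e (EPlus f g (s * t) (s * u)) r 1)
| ax_D3 b e f r s :
    wequiv (ETest b ;; EPlus e f r s) (ETest b ;; EPlus (ETest b ;; e) (ETest b ;; f) r s)
| ax_S1l e : wequiv (one ;; e) e
| ax_S1r e : wequiv e (e ;; one)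
| ax_S2 e f g : wequiv ((e ;; f) ;; g) (e ;; (f ;; g))
| ax_S3 e : wequiv (ETest BZero ;; e) (ETest BZero)
| ax_S4 e f g r s : wequiv (EPlus e f r s ;; g) (EPlus (e ;; g) (f ;; g) r s)
| ax_S5 e f g b : wequiv (EIf e f b ;; g) (EIf (e ;; g) (f ;; g) b)
| ax_S6 v e : wequiv (ERet v ;; e) (ERet v)
| ax_S7 b c : wequiv (ETest b ;; ETest c) (ETest (BAnd b c))
| ax_L1 e b : wequiv (ELoop e b) (EIf (e ;; ELoop e b) one b)
| ax_C1 : wequiv (odot 1) one
| ax_C2 e : wequiv (odot 0 ;; e) (odot 0)
| ax_W1 e r s : wequiv (EPlus e e r s) (odot (r + s) ;; e)
| ax_W2 e f r s : wequiv (EPlus e f r s) (EPlus f e s r)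
| ax_W3 e f g r s t u :
    wequiv (EPlus e (EPlus f g t u) r s) (EPlus (EPlus e f r (s * t)) g 1 (s * u))
| ax_W4 e f r s u : wequiv (EPlus e f (r * u) s) (EPlus (odot u ;; e) f r s)
| rule_L2 e f g b c r s :
    wequiv e (EIf (EPlus f one r s) g c) ->
    wequiv (ETest c ;; ELoop e b)
          (ETest c ;; EIf (odot (star s * r) ;; (f ;; ELoop e b)) one b)
| rule_F1 e f g b :
    wequiv g (EIf (e ;; g) f b) -> (forall a, Eterm e a = 0) ->
    wequiv g (ELoop e b ;; f).

End Exprs.
Arguments Acc {Act Out X}. Arguments Rej {Act Out X}.

From Pilot Require Import Defs.
From mathcomp Require Import all_boot all_order all_algebra boolp.
From Stdlib Require List ClassicalEpsilon.
Import GRing.Theory.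
Local Open Scope ring_scope.
Set Implicit Arguments. Unset Strict Implicit. Unset Printing Implicit Defensive.

(* Every quantity that the derivative of [e] at an atom exposes -- the
   termination weight [E(e)], the rejection and return weights, and the total
   weight of [p]-transitions into any ≡-closed set of expressions -- is
   invariant under ≡.  This is checked rule by rule: sequencing and loops are
   handled by observing the body through its continuation, and the loop rules
   come down to the Conway identities [a* = 1 + a a*] and
   [(a + b)* = b* + b* a (a + b)*].  Hence the derivative descends to ≡-classes,
   computed on any representative with transitions collected class by class,
   and the class map [e |-> [e]] is a homomorphism whose kernel is ≡. *)

Section SumsOverLists.
Variables (S : pzSemiRingType) (X : Type).

Lemma sum_neq0_In (l : seq X) (P : pred X) (F : X -> S) :
  \sum_(x <- l | P x) F x <> 0 -> exists2 x, List.In x l & P x.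
Proof.
elim: l => [|x l IHl]; first by rewrite big_nil.
rewrite big_cons; case: ifP => [Px _|_ /IHl [y ly Py]]; first by exists x; [left|].
by exists y; [right|].
Qed.

Lemma sum_NoDup_indicator (s : seq X) (A : X -> Prop) (y : X) (w : S) :
  List.NoDup s -> List.In y s ->
  \sum_(x <- s | `[< A x >]) (if `[< y = x >] then w else 0) = if `[< A y >] then w else 0.
Proof.
have sum_notIn t : ~ List.In y t ->
    \sum_(x <- t | `[< A x >]) (if `[< y = x >] then w else 0) = 0.
  elim: t => [_|z t IHt y_zt]; first by rewrite big_nil.
  rewrite big_cons (asboolF (P := y = z)) => [|eq_yz]; last by apply: y_zt; left.
  by rewrite IHt => [|y_t]; [case: ifP; rewrite ?add0r | apply: y_zt; right].
elim: s => [|x s IHs] //= /List.NoDup_cons_iff [x_s nodup_s] y_in.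
rewrite big_cons; case: y_in => [eq_xy|y_s].
  by rewrite (asboolT (esym eq_xy)) sum_notIn ?addr0 -?eq_xy.
rewrite (asboolF (P := y = x)) => [|eq_yx]; last by apply: x_s; rewrite -eq_yx.
by rewrite IHs //; case: ifP; rewrite ?add0r.
Qed.

Lemma sum_fibers (Y : Type) (L : seq (Y * S)) (j : Y -> X) (s : seq X) (A : X -> Prop) :
  List.NoDup s -> (forall t, List.In t L -> List.In (j t.1) s) ->
  \sum_(x <- s | `[< A x >]) \sum_(t <- L | `[< j t.1 = x >]) t.2
    = \sum_(t <- L | `[< A (j t.1) >]) t.2.
Proof.
move=> nodup_s; elim: L => [|u L IHL] L_s.
  by rewrite big_nil big1 // => x _; rewrite big_nil.
have split_u x : \sum_(t <- u :: L | `[< j t.1 = x >]) t.2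
    = (if `[< j u.1 = x >] then u.2 else 0) + \sum_(t <- L | `[< j t.1 = x >]) t.2.
  by rewrite big_cons; case: ifP; rewrite ?add0r.
under eq_bigr => x _ do rewrite split_u.
rewrite big_split /= sum_NoDup_indicator //; last by apply: L_s; left.
rewrite IHL => [|t Lt]; last by apply: L_s; right.
by rewrite big_cons; case: ifP; rewrite ?add0r.
Qed.

Lemma massP_sum (f : X -> S) (A : X -> Prop) (s : seq X) :
  List.NoDup s -> (forall x, f x <> 0 -> List.In x s) ->
  massP f A (\sum_(x <- s | `[< A x >]) f x).
Proof. by move=> nodup_s supp_f; exists s; rewrite big_mkcond. Qed.

End SumsOverLists.

Section Conway.
Variables (S : pzSemiRingType) (star : S -> S).
Hypothesis conway_sum : forall a b : S, star (a + b) = star a * star (b * star a).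
Hypothesis conway_prod : forall a b : S, star (a * b) = 1 + a * star (b * a) * b.

Lemma star_unfold (a : S) : star a = 1 + a * star a.
Proof. by have := conway_prod a 1; rewrite mulr1 mul1r mulr1. Qed.

Lemma star0 : star 0 = 1.
Proof. by rewrite star_unfold mul0r addr0. Qed.

Lemma star_add_unfold (a b : S) : star (a + b) = star b + star b * a * star (a + b).
Proof.
have star_ab : star (a + b) = star b * star (a * star b) by rewrite addrC conway_sum.
by rewrite star_ab {1}(star_unfold (a * star b)) mulrDr mulr1 !mulrA.
Qed.

End Conway.

Section Derivatives.
Variables (T : finType) (Act Out : Type) (S : pzSemiRingType) (star : S -> S).

Local Notation Exp := (Exp T Act Out S).
Local Notation Ev := (Ev Act Out Exp).
Local Notation At := (At T).
Local Notation wd := (@wderiv T Act Out S star).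
Local Notation ETest := (@ETest T Act Out S).
Local Notation Tr := (@Tr Act Out Exp).
Local Notation Ret := (@Ret Act Out Exp).
Local Notation one := (ETest BOne).

Lemma ind_refl (o : Ev) : ind o o = 1.
Proof. by rewrite /ind asboolT. Qed.

Lemma ind_neq (o o' : Ev) : o <> o' -> ind o o' = 0.
Proof. by move=> neq_oo'; rewrite /ind asboolF. Qed.

Lemma eq_Tr (p q : Act) (x y : Exp) : Tr p x = Tr q y :> Ev <-> p = q /\ x = y.
Proof. by split=> [[-> ->]|[-> ->]]. Qed.

Lemma wderiv_acc (e : Exp) (a : At) : wd e a Acc = Eterm e a.
Proof.
elim: e => [p|b|e IHe f IHf b|e IHe f IHf|e IHe b|v|e IHe f IHf r s] /=.
- by rewrite ind_neq.
- by case: (beval b a); rewrite ?ind_refl ?ind_neq.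
- by case: (beval b a).
- by rewrite IHe IHf addr0.
- by [].
- by rewrite ind_neq.
- by rewrite IHe IHf.
Qed.

(* The transitions of [e] at [a] as a finite list; a target may be listed
   several times, its weight being the sum ([wderiv_tr]). *)
Fixpoint wtrans (e : Exp) (a : At) : seq ((Act * Exp) * S) :=
  match e with
  | Defs.EAct p => [:: ((p, one), 1)]
  | EIf e f b => if beval b a then wtrans e a else wtrans f a
  | EPlus e f r s =>
      [seq (t.1, r * t.2) | t <- wtrans e a] ++ [seq (t.1, s * t.2) | t <- wtrans f a]
  | ESeq e f =>
      [seq (t.1, Eterm e a * t.2) | t <- wtrans f a] ++
      [seq ((t.1.1, ESeq t.1.2 f), t.2) | t <- wtrans e a]
  | ELoop e b =>
      if beval b a then
        [seq ((t.1.1, ESeq t.1.2 (ELoop e b)), star (Eterm e a) * t.2) | t <- wtrans e a]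
      else [::]
  | _ => [::]
  end.

Definition tr_mass (e : Exp) (a : At) (p : Act) (P : Exp -> Prop) : S :=
  \sum_(t <- wtrans e a | `[< t.1.1 = p /\ P t.1.2 >]) t.2.

Lemma eq_tr_mass (e : Exp) a p (P Q : Exp -> Prop) :
  (forall x, P x <-> Q x) -> tr_mass e a p P = tr_mass e a p Q.
Proof.
move=> PQ; apply: eq_bigl => t; apply: asbool_equiv_eq.
by split=> -[-> /PQ].
Qed.

Lemma tr_mass_pred0 (e : Exp) a p (P : Exp -> Prop) :
  (forall x, ~ P x) -> tr_mass e a p P = 0.
Proof. by move=> notP; rewrite /tr_mass big_pred0 // => t; rewrite asboolF // => -[_ /notP]. Qed.

Lemma tr_mass_plus (e f : Exp) r s a p P :
  tr_mass (EPlus e f r s) a p P = r * tr_mass e a p P + s * tr_mass f a p P.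
Proof. by rewrite /tr_mass big_cat !big_map -!mulr_sumr. Qed.

Lemma tr_mass_seq (e f : Exp) a p P :
  tr_mass (ESeq e f) a p P = Eterm e a * tr_mass f a p P + tr_mass e a p (fun x => P (ESeq x f)).
Proof. by rewrite /tr_mass big_cat !big_map -!mulr_sumr. Qed.

Lemma tr_mass_loop (e : Exp) b a p P :
  tr_mass (ELoop e b) a p P =
    if beval b a then star (Eterm e a) * tr_mass e a p (fun x => P (ESeq x (ELoop e b)))
    else 0.
Proof. by rewrite /tr_mass /=; case: (beval b a); rewrite ?big_nil // big_map -mulr_sumr. Qed.

Lemma wderiv_tr (e : Exp) a p g : wd e a (Tr p g) = tr_mass e a p (fun x => x = g).
Proof.
elim: e g => [q|b|e IHe f IHf b|e IHe f IHf|e IHe b|v|e IHe f IHf r s] g.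
- rewrite /tr_mass /= big_cons big_nil addr0 /ind.
  by rewrite (asbool_equiv_eq (eq_Tr _ _ _ _)); case: ifP.
- by rewrite /tr_mass /= big_nil; case: (beval b a); rewrite ind_neq.
- by rewrite /tr_mass /=; case: (beval b a); rewrite ?IHe ?IHf.
- rewrite tr_mass_seq /= wderiv_acc IHf; congr (_ + _).
  case: g => [q|c|e1 f1 c|e' f'|e1 c|v|e1 f1 r s]; try by rewrite tr_mass_pred0.
  case: (asboolP (f' = _)) => [->|neq_f]; last by rewrite tr_mass_pred0 // => x [_ /esym].
  by rewrite IHe; apply: eq_tr_mass => x; split=> [->|[]].
- rewrite tr_mass_loop /= wderiv_acc; case: (beval b a) => //.
  case: g => [q|c|e1 f1 c|e' f'|e1 c|v|e1 f1 r s]; try by rewrite tr_mass_pred0 ?mulr0.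
  case: (asboolP (f' = _)) => [->|neq_f]; last by rewrite tr_mass_pred0 ?mulr0 // => x [_ /esym].
  by rewrite IHe; congr (_ * _); apply: eq_tr_mass => x; split=> [->|[]].
- by rewrite /tr_mass /= big_nil ind_neq.
- by rewrite tr_mass_plus /= IHe IHf.
Qed.

Lemma tr_mass_neq0 (e : Exp) a p P :
  tr_mass e a p P <> 0 -> exists2 t, List.In t (wtrans e a) & t.1.1 = p /\ P t.1.2.
Proof. by move=> /sum_neq0_In [t et /asboolW]; exists t. Qed.

Fixpoint rets (e : Exp) : seq Out :=
  match e with
  | Defs.ERet v => [:: v]
  | EIf e f _ | ESeq e f | EPlus e f _ _ => rets e ++ rets f
  | ELoop e _ => rets e
  | _ => [::]
  end.

Lemma wderiv_ret_rets (e : Exp) a v : wd e a (Ret v) <> 0 -> List.In v (rets e).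
Proof.
elim: e => [q|b|e IHe f IHf b|e IHe f IHf|e IHe b|w|e IHe f IHf r s] /=.
- by rewrite ind_neq.
- by case: (beval b a); rewrite ind_neq.
- by case: (beval b a) => [/IHe|/IHf] ?; apply: List.in_or_app; [left|right].
- move=> nz; apply: List.in_or_app.
  have [f0|/IHf] := pselect (wd f a (Ret v) = 0); last by right.
  by left; apply: IHe => e0; apply: nz; rewrite f0 e0 mulr0 addr0.
- by case: (beval b a) => // nz; apply: IHe => e0; apply: nz; rewrite e0 mulr0.
- by have [->|neq_wv] := pselect (w = v); [left | rewrite ind_neq //; case].
- move=> nz; apply: List.in_or_app.
  have [f0|/IHf] := pselect (wd f a (Ret v) = 0); last by right.
  by left; apply: IHe => e0; apply: nz; rewrite f0 e0 !mulr0 addr0.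
Qed.

Definition deriv_supp (e : Exp) (a : At) : seq Ev :=
  [:: Acc, Rej & [seq Ret v | v <- rets e]] ++ [seq Tr t.1.1 t.1.2 | t <- wtrans e a].

Lemma deriv_supp_tr (e : Exp) a t :
  List.In t (wtrans e a) -> List.In (Tr t.1.1 t.1.2) (deriv_supp e a).
Proof. by move=> et; right; right; apply: List.in_or_app; right; exact: List.in_map et. Qed.

Lemma wderiv_supp (e : Exp) a o : wd e a o <> 0 -> List.In o (deriv_supp e a).
Proof.
case: o => [| |v|p g] nz; [by left | by right; left | |].
- right; right; apply: List.in_or_app; left.
  exact: List.in_map (wderiv_ret_rets nz).
- by move: nz; rewrite wderiv_tr => /tr_mass_neq0 [t et [<- <-]]; apply: deriv_supp_tr.
Qed.

Lemma massP_tr_mass (e : Exp) a p (P : Exp -> Prop) :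
  massP (wd e a) (fun o => exists x, o = Tr p x /\ P x) (tr_mass e a p P).
Proof.
pose A o := exists x, o = Tr p x /\ P x.
pose s := List.nodup (fun o o' : Ev => pselect (o = o')) (deriv_supp e a).
have nodup_s : List.NoDup s by apply: List.NoDup_nodup.
have supp_s o : wd e a o <> 0 -> List.In o s.
  by move=> /wderiv_supp; rewrite List.nodup_In.
suff -> : tr_mass e a p P = \sum_(o <- s | `[< A o >]) wd e a o by apply: massP_sum.
have fiber o : `[< A o >] ->
    wd e a o = \sum_(t <- wtrans e a | `[< Tr t.1.1 t.1.2 = o >]) t.2.
  move=> /asboolW [x [-> _]]; rewrite wderiv_tr; apply: eq_bigl => t.
  by apply: asbool_equiv_eq; rewrite eq_Tr.
rewrite (eq_bigr _ fiber) (sum_fibers (j := fun y : Act * Exp => Tr y.1 y.2)) // => [|t et].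
  apply: eq_bigl => t; apply: asbool_equiv_eq; rewrite /A.
  by split=> [[<- Pt]|[x [/eq_Tr [-> ->]]]]; [exists t.1.2|].
by rewrite List.nodup_In; apply: deriv_supp_tr.
Qed.

End Derivatives.

Section Soundness.
Variables (T : finType) (Act Out : Type) (S : pzSemiRingType) (star : S -> S).
Hypothesis conway_sum : forall a b : S, star (a + b) = star a * star (b * star a).
Hypothesis conway_prod : forall a b : S, star (a * b) = 1 + a * star (b * a) * b.

Local Notation Exp := (Exp T Act Out S).
Local Notation At := (At T).
Local Notation wd := (@wderiv T Act Out S star).
Local Notation weq := (@wequiv T Act Out S star).
Local Notation tr_mass := (@tr_mass T Act Out S star).
Local Notation ETest := (@ETest T Act Out S).
Local Notation odot := (@odot T Act Out S).
Local Notation Ret := (@Ret Act Out Exp).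
Local Notation one := (ETest BOne).

Inductive obs : Type :=
  | ObsAcc | ObsRej | ObsRet of Out | ObsTr of Act & (Exp -> Prop) | ObsNone.

Definition obs_val (c : obs) (e : Exp) (a : At) : S :=
  match c with
  | ObsAcc => Eterm e a
  | ObsRej => wd e a Rej
  | ObsRet v => wd e a (Ret v)
  | ObsTr p P => tr_mass e a p P
  | ObsNone => 0
  end.

Definition obs_test (c : obs) (t : bool) : S :=
  match c with
  | ObsAcc => if t then 1 else 0
  | ObsRej => if t then 0 else 1
  | _ => 0
  end.

(* What [c] sees of [e] inside a context [F e] such as [e ;; f]: acceptance of
   [e] is not observable there, and transitions land in [F _]. *)
Definition obs_cont (c : obs) (F : Exp -> Exp) : obs :=
  match c with
  | ObsAcc => ObsNone
  | ObsTr p P => ObsTr p (fun x => P (F x))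
  | _ => c
  end.

Definition obs_closed (c : obs) : Prop :=
  if c is ObsTr _ P then forall x y, weq x y -> P x -> P y else True.

Definition obs_equiv (e f : Exp) : Prop :=
  forall c a, obs_closed c -> obs_val c e a = obs_val c f a.

Lemma obs_equiv_Eterm (e f : Exp) a : obs_equiv e f -> Eterm e a = Eterm f a.
Proof. by move/(_ ObsAcc a I). Qed.

Lemma obs_val_test c b a : obs_val c (ETest b) a = obs_test c (beval b a).
Proof.
by case: c => [||v|p P|] /=; case: (beval b a); rewrite ?ind_refl ?ind_neq // /tr_mass big_nil.
Qed.

Lemma obs_val_if c (e f : Exp) b a :
  obs_val c (EIf e f b) a = if beval b a then obs_val c e a else obs_val c f a.
Proof. by case: c => [||v|p P|] /=; rewrite ?/tr_mass /=; case: (beval b a). Qed.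

Lemma obs_val_plus c (e f : Exp) r s a :
  obs_val c (EPlus e f r s) a = r * obs_val c e a + s * obs_val c f a.
Proof. by case: c => [||v|p P|] /=; rewrite ?tr_mass_plus ?mulr0 ?addr0. Qed.

Lemma obs_val_seq c (e f : Exp) a :
  obs_val c (ESeq e f) a =
    Eterm e a * obs_val c f a + obs_val (obs_cont c (fun x => ESeq x f)) e a.
Proof. by case: c => [||v|p P|] /=; rewrite ?tr_mass_seq ?wderiv_acc ?mulr0 ?addr0. Qed.

Lemma obs_val_loop c (e : Exp) b a :
  obs_val c (ELoop e b) a =
    if beval b a then star (Eterm e a) * obs_val (obs_cont c (fun x => ESeq x (ELoop e b))) e a
    else obs_test c true.
Proof.
by case: c => [||v|p P|] /=; rewrite ?tr_mass_loop ?wderiv_acc; case: (beval b a); rewrite ?mulr0.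
Qed.

Lemma obs_test_cont c F t : obs_test (obs_cont c F) t = if t then 0 else obs_test c false.
Proof. by case: c => [||v|p P|]; case: t. Qed.

Lemma obs_cont_comp c F G : obs_cont (obs_cont c F) G = obs_cont c (fun x => F (G x)).
Proof. by case: c. Qed.

Lemma obs_val_guard c b (e : Exp) a :
  obs_val c (ESeq (ETest b) e) a = if beval b a then obs_val c e a else obs_test c false.
Proof.
rewrite obs_val_seq obs_val_test obs_test_cont /=.
by case: (beval b a); rewrite ?mul1r ?addr0 ?mul0r ?add0r.
Qed.

Lemma obs_val_odot c r a : obs_val c (odot r) a = r * obs_test c true.
Proof. by rewrite obs_val_plus !obs_val_test mul0r addr0. Qed.

Lemma obs_val_odot_seq c r (e : Exp) a : obs_val c (ESeq (odot r) e) a = r * obs_val c e a.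
Proof. by rewrite obs_val_seq obs_val_odot obs_test_cont /= mulr1 mul0r !addr0 mulr0 addr0. Qed.

Lemma obs_closed_cont c F :
  obs_closed c -> (forall x y, weq x y -> weq (F x) (F y)) -> obs_closed (obs_cont c F).
Proof. by case: c => //= p P closedP congrF x y /congrF; apply: closedP. Qed.

Lemma eq_obs_val_cont c F G e a :
  obs_closed c -> (forall x, weq (F x) (G x)) ->
  obs_val (obs_cont c F) e a = obs_val (obs_cont c G) e a.
Proof.
case: c => //= p P closedP FG; apply: eq_tr_mass => x.
by split; apply: closedP; [exact: FG | exact: Defs.eq_sym (FG x)].
Qed.

Lemma seq_wequivl (f x y : Exp) : weq x y -> weq (ESeq x f) (ESeq y f).
Proof. by move=> xy; apply: eq_seq xy (Defs.eq_refl _ f). Qed.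

Lemma obs_equiv_seq (e e' f f' : Exp) :
  weq f f' -> obs_equiv e e' -> obs_equiv f f' -> obs_equiv (ESeq e f) (ESeq e' f').
Proof.
move=> ff' ee' eq_ff' c a cc; rewrite !obs_val_seq (obs_equiv_Eterm a ee') (eq_ff' c a cc).
rewrite (ee' _ a (obs_closed_cont cc (@seq_wequivl f))).
by rewrite (eq_obs_val_cont _ _ cc (fun x => eq_seq (Defs.eq_refl _ x) ff')).
Qed.

Lemma obs_equiv_loop (e e' : Exp) b b' :
  weq e e' -> ba_eq b b' -> obs_equiv e e' -> obs_equiv (ELoop e b) (ELoop e' b').
Proof.
move=> ee' bb' eq_ee' c a cc; rewrite !obs_val_loop bb' (obs_equiv_Eterm a eq_ee').
rewrite (eq_ee' _ a (obs_closed_cont cc (@seq_wequivl _))).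
by rewrite (eq_obs_val_cont _ _ cc (fun x => eq_seq (Defs.eq_refl _ x) (eq_loop ee' bb'))).
Qed.

Lemma obs_equiv_L2 (e f g : Exp) b c r s :
  obs_equiv e (EIf (EPlus f one r s) g c) ->
  obs_equiv (ESeq (ETest c) (ELoop e b))
    (ESeq (ETest c) (EIf (ESeq (odot (star s * r)) (ESeq f (ELoop e b))) one b)).
Proof.
move=> eq_e d a dc; rewrite !obs_val_guard.
case c_a: (beval c a) => //; rewrite obs_val_if.
case b_a: (beval b a); last by rewrite obs_val_loop b_a obs_val_test.
have E_e : Eterm e a = r * Eterm f a + s.
  by rewrite (obs_equiv_Eterm a eq_e) /= c_a mulr1.
set d' := obs_cont d (fun x => ESeq x (ELoop e b)).
have d'_e : obs_val d' e a = r * obs_val d' f a.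
  rewrite (eq_e d' a (obs_closed_cont dc (@seq_wequivl _))) obs_val_if c_a obs_val_plus.
  by rewrite obs_val_test obs_test_cont mulr0 addr0.
rewrite obs_val_odot_seq obs_val_seq !obs_val_loop b_a -/d' d'_e E_e.
by rewrite {1}(star_add_unfold conway_sum conway_prod) mulrDl mulrDr !mulrA addrC.
Qed.

Lemma obs_equiv_F1 (e f g : Exp) b :
  weq g (EIf (ESeq e g) f b) -> obs_equiv g (EIf (ESeq e g) f b) ->
  (forall a, Eterm e a = 0) -> obs_equiv g (ESeq (ELoop e b) f).
Proof.
move=> g_unfold eq_g e0 c a cc.
(* the continuation [_ ;; g] of [e] becomes [(_ ;; e^(b)) ;; f], which F1 itself justifies *)
have g_loop := rule_F1 g_unfold e0.
rewrite (eq_g c a cc) obs_val_if obs_val_seq [RHS]obs_val_seq.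
case b_a: (beval b a); last by rewrite /= b_a mul1r obs_val_loop b_a obs_test_cont addr0.
rewrite e0 mul0r add0r /= b_a mul0r add0r obs_val_loop b_a e0.
rewrite (star0 conway_prod) mul1r obs_cont_comp; apply: eq_obs_val_cont => // x.
exact: Defs.eq_trans (eq_seq (Defs.eq_refl _ x) g_loop) (Defs.eq_sym (ax_S2 _ _ _ _)).
Qed.

Lemma obs_equiv_seq1 (e : Exp) : obs_equiv e (ESeq e one).
Proof.
move=> c a cc; rewrite obs_val_seq obs_val_test.
case: c cc => [||v|p P|] //= closedP; rewrite ?mulr1 ?mulr0 ?addr0 ?add0r //.
apply: eq_tr_mass => x.
by split; apply: closedP; [exact: ax_S1r | exact: Defs.eq_sym (ax_S1r _ _)].
Qed.

Lemma obs_equiv_seqA (e f g : Exp) : obs_equiv (ESeq (ESeq e f) g) (ESeq e (ESeq f g)).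
Proof.
move=> c a cc; rewrite !obs_val_seq obs_cont_comp.
by rewrite (eq_obs_val_cont _ _ cc (fun x => ax_S2 _ x f g)) mulrDr !mulrA addrA.
Qed.

Lemma obs_equiv_unroll (e : Exp) b : obs_equiv (ELoop e b) (EIf (ESeq e (ELoop e b)) one b).
Proof.
move=> c a _; rewrite obs_val_if obs_val_seq obs_val_test !obs_val_loop /=.
case: (beval b a); rewrite ?addr0 //.
by rewrite {1}(star_unfold conway_prod) mulrDl mul1r mulrA addrC.
Qed.

Theorem wequiv_obs_equiv (e f : Exp) : weq e f -> obs_equiv e f.
Proof.
elim=> {e f}.
- by [].
- by move=> e f _ ef c a cc; rewrite ef.
- by move=> e f g _ ef _ fg c a cc; rewrite ef // fg.
- by move=> b b' bb' c a _; rewrite !obs_val_test bb'.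
- by move=> e e' f f' b b' _ ee' _ ff' bb' c a cc; rewrite !obs_val_if bb' ee' // ff'.
- by move=> e e' f f' _ ee' ff' eq_ff'; apply: obs_equiv_seq.
- by move=> e e' b b' ee' eq_ee' bb'; apply: obs_equiv_loop.
- by move=> e e' f f' r s _ ee' _ ff' c a cc; rewrite !obs_val_plus ee' // ff'.
- by move=> e b c a _; rewrite obs_val_if; case: (beval b a).
- by move=> e f b c a _; rewrite !obs_val_if obs_val_guard; case: (beval b a).
- by move=> e f b c a _; rewrite !obs_val_if /=; case: (beval b a).
- by move=> e f g b b' c a _; rewrite !obs_val_if /=; case: (beval b a); case: (beval b' a).
- by move=> e f g b r s c a _; rewrite obs_val_plus !obs_val_if !obs_val_plus; case: (beval b a).
- by move=> e f g r s t u c a _; rewrite !obs_val_plus !mulrDr !mulrA mul1r.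
- by move=> b e f r s c a _; rewrite !obs_val_guard !obs_val_plus !obs_val_guard; case: (beval b a).
- by move=> e c a _; rewrite obs_val_guard.
- exact: obs_equiv_seq1.
- exact: obs_equiv_seqA.
- by move=> e c a _; rewrite obs_val_guard obs_val_test.
- move=> e f g r s c a _; rewrite obs_val_seq !obs_val_plus !obs_val_seq /=.
  by rewrite mulrDl !mulrDr !mulrA addrACA.
- by move=> e f g b c a _; rewrite obs_val_seq !obs_val_if !obs_val_seq /=; case: (beval b a).
- by move=> v e [||w|p P|] a _; rewrite obs_val_seq /= mul0r add0r // /tr_mass !big_nil.
- by move=> b b' c a _; rewrite obs_val_guard !obs_val_test /=; case: (beval b a).
- exact: obs_equiv_unroll.
- by move=> c a _; rewrite obs_val_odot obs_val_test mul1r.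
- by move=> e c a _; rewrite obs_val_odot_seq obs_val_odot !mul0r.
- by move=> e r s c a _; rewrite obs_val_plus obs_val_odot_seq mulrDl.
- by move=> e f r s c a _; rewrite !obs_val_plus addrC.
- by move=> e f g r s t u c a _; rewrite !obs_val_plus mul1r mulrDr !mulrA addrA.
- by move=> e f r s u c a _; rewrite !obs_val_plus obs_val_odot_seq mulrA.
- by move=> e f g b c r s _ eq_e; exact: (obs_equiv_L2 _ eq_e).
- by move=> e f g b g_unfold eq_g e0; apply: obs_equiv_F1.
Qed.

End Soundness.

Arguments ObsAcc {T Act Out S}.
Arguments ObsRej {T Act Out S}.
Arguments ObsRet {T Act Out S} v.
Arguments ObsNone {T Act Out S}.

Section Quotient.
Variables (T : finType) (Act Out : Type) (S : pzSemiRingType) (star : S -> S).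
Hypothesis conway_sum : forall a b : S, star (a + b) = star a * star (b * star a).
Hypothesis conway_prod : forall a b : S, star (a * b) = 1 + a * star (b * a) * b.

Local Notation Exp := (Exp T Act Out S).
Local Notation Class := (Exp -> Prop).
Local Notation At := (At T).
Local Notation wd := (@wderiv T Act Out S star).
Local Notation weq := (@wequiv T Act Out S star).
Local Notation ETest := (@ETest T Act Out S).

Lemma wequiv_class_eq (e f : Exp) : weq e = weq f <-> weq e f.
Proof.
split=> [eq_ef|ef]; first by rewrite eq_ef; apply: Defs.eq_refl.
apply/funext => x; apply/propext.
by split; apply: Defs.eq_trans; [exact: Defs.eq_sym ef | exact: ef].
Qed.

(* Predicates that are not ≡-classes are junk states, with an arbitrary representative. *)
Definition class_rep (y : Class) : Exp :=
  ClassicalEpsilon.epsilon (inhabits (ETest BZero)) (fun e => weq e = y).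

Lemma class_repK (e : Exp) : weq (class_rep (weq e)) e.
Proof.
apply/wequiv_class_eq.
by apply: (ClassicalEpsilon.epsilon_spec _ (fun x => weq x = weq e)); exists e.
Qed.

Definition ev_map (X Y : Type) (F : X -> Y) (o : Ev Act Out X) : Ev Act Out Y :=
  match o with
  | Acc => Acc
  | Rej => Rej
  | Defs.Ret v => @Defs.Ret Act Out Y v
  | Defs.Tr p x => @Defs.Tr Act Out Y p (F x)
  end.

Definition class_obs (o : Ev Act Out Class) : obs T Act Out S :=
  match o with
  | Acc => ObsAcc
  | Rej => ObsRej
  | Defs.Ret v => ObsRet v
  | Defs.Tr p y => ObsTr p (fun x => weq x = y)
  end.

Definition qderiv (y : Class) (a : At) (o : Ev Act Out Class) : S :=
  obs_val star (class_obs o) (class_rep y) a.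

Lemma class_obs_closed o : obs_closed star (class_obs o).
Proof.
by case: o => //= p y x x' xx' <-; apply/wequiv_class_eq; exact: Defs.eq_sym xx'.
Qed.

Lemma qderiv_class (e : Exp) a o : qderiv (weq e) a o = obs_val star (class_obs o) e a.
Proof.
exact: (wequiv_obs_equiv conway_sum conway_prod (class_repK e) a (class_obs_closed o)).
Qed.

Lemma qderiv_automaton : is_automaton qderiv.
Proof.
move=> y a; exists (map (ev_map weq) (deriv_supp star (class_rep y) a)).
case=> [| |v|p y']; rewrite /qderiv /= => nz; [by left | by right; left | |].
- exact: (List.in_map (ev_map weq) _ _ (wderiv_supp nz)).
- have [t et [<- /= <-]] := tr_mass_neq0 nz.
  exact: (List.in_map (ev_map weq) _ _ (deriv_supp_tr et)).
Qed.

Lemma qderiv_hom : is_hom wd qderiv weq.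
Proof.
move=> e a; split; first by rewrite qderiv_class wderiv_acc.
split; first exact: qderiv_class.
by split=> [v|p y]; rewrite qderiv_class //; apply: massP_tr_mass.
Qed.

End Quotient.

Theorem mainTheorem4 (T : finType) (Act Out : Type) (S : pzSemiRingType)
  (star : S -> S)
  (S_positive : forall x y : S, x + y = 0 -> x = 0 /\ y = 0)
  (S_refinement : forall x y z w : S, x + y = z + w ->
     exists s t u v : S, [/\ s + t = x, s + u = z, u + v = y & t + v = w])
  (S_conway_sum : forall a b : S, star (a + b) = star a * star (b * star a))
  (S_conway_prod : forall a b : S, star (a * b) = 1 + a * star (b * a) * b) :
  exists (Y : Type) (gamma : Y -> At T -> Ev Act Out Y -> S)
         (h : Exp T Act Out S -> Y),
    is_automaton gamma /\
    is_hom (@wderiv T Act Out S star) gamma h /\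
    (forall e f : Exp T Act Out S, h e = h f <-> @wequiv T Act Out S star e f).
Proof.
exists (Exp T Act Out S -> Prop), (qderiv star), (wequiv star).
split; first exact: qderiv_automaton.
split; first exact: qderiv_hom S_conway_sum S_conway_prod.
exact: wequiv_class_eq.
Qed.
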